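(* For every non-trivial geometric lattice $\mathcal L$, the product $\bullet$ on $\mathcal{MD}(\mathcal L)$ is associative, graded commutative (i.e. $\Gamma_1\bullet\Gamma_2=(-1)^{\deg\Gamma_1\deg\Gamma_2}\Gamma_2\bullet\Gamma_1$), preserves degrees (degrees add), and has unit the class of the empty modular diagram $(\mathcal L,\mathrm{id}_{\mathcal L},\emptyset)$.
   Context: Geometric lattices. A geometric lattice is a finite lattice $\mathcal L$ (bottom $\hat0$, top $\hat1$, join $\vee$, meet $\wedge$) which is ranked (all maximal chains from $\hat0$ to a given element $F$ have the same length $\mathrm{rk}(F)$), atomic (every element is a join of atoms, i.e. rank-one elements) and semimodular ($\mathrm{rk}(F_1\wedge F_2)+\mathrm{rk}(F_1\vee F_2)\le\mathrm{rk}(F_1)+\mathrm{rk}(F_2)$). Elements are called flats, $\mathrm{At}(\mathcal L)$ denotes the set of atoms, and $\mathcal L$ is non-trivial if it has at least two elements. For a finite family $J$ of atoms, $\bigvee J$ is its join ($\bigvee\emptyset=\hat0$). Every interval $[F_1,F_2]$ is a geometric lattice, and products of geometric lattices are geometric lattices. A flat $F$ is modular if $\mathrm{rk}(F\wedge F')+\mathrm{rk}(F\vee F')=\mathrm{rk}(F)+\mathrm{rk}(F')$ for every flat $F'$. An embedding $\varphi:\mathcal L_1\to\mathcal L_2$ of geometric lattices is an injective order-preserving map preserving joins and sending atoms to atoms. Modular diagrams. Let $\mathcal L$ be a non-trivial geometric lattice. A modular extension of $\mathcal L$ is a pair $(\mathcal E,\iota)$ where $\mathcal E$ is a geometric lattice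 and $\iota:\mathcal L\to\mathcal E$ is an embedding whose image is an interval $[\hat0,F_\iota]$ with $F_\iota$ a modular flat of $\mathcal E$. A modular diagram of $\mathcal L$ is a triple $\Gamma=(\mathcal E,\iota,J)$ with $(\mathcal E,\iota)$ a modular extension and $J=(H_1,\dots,H_n)$ a finite word in the alphabet $\mathrm{At}(\mathcal E)$; its degree is $\deg\Gamma=n-2\big(\mathrm{rk}\bigvee J-\mathrm{rk}((\bigvee J)\wedge F_\iota)\big)$. $\mathcal{MD}(\mathcal L)$ is the $\mathbb Z$-graded $\mathbb Q$-vector space spanned by all modular diagrams, quotiented by the relations: (R1) $(\mathcal E,\iota,J)\sim-(\mathcal E,\iota,J')$ if $J'$ is obtained from $J$ by transposing two letters; (R2) $(\mathcal E,\iota,J)\sim(\mathcal E',\iota',J')$ if there is an embedding $\varphi:\mathcal E\to\mathcal E'$ with $\mathrm{rk}(\mathcal E)=\mathrm{rk}(\mathcal E')$, $\iota'=\varphi\circ\iota$ and $J'=\varphi(J)$ letterwise; (R3) $(\mathcal E,\iota,J)\sim0$ if $F_\iota\vee\bigvee J<\hat1_{\mathcal E}$; (R4) $(\mathcal E,\iota,J)\sim0$ if $\mathcal E\cong\mathcal E_1\times\mathcal E_2$ with $\mathcal E_1,\mathcal E_2$ non-trivial and $F_\iota\in\mathcal E_1\times\{\hat0\}$; (R5) $(\mathcal E,\iota,J)\sim0$ if there is a modular flat $F\ge F_\iota$ of $\mathcal E$ such that exactly two letters of $J$ are not below $F$. Product. For modular extensions $(\mathcal E_1,\iota_1),(\mathcal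 E_2,\iota_2)$ of $\mathcal L$, the pushout $\mathcal E_1\cup_{\mathcal L}\mathcal E_2$ is the subposet of $\mathcal E_1\times\mathcal E_2$ of pairs $(F_1,F_2)$ with $\iota_1^{-1}(F_1\wedge F_{\iota_1})=\iota_2^{-1}(F_2\wedge F_{\iota_2})$; it is a geometric lattice, and $\iota_{12}(A)=(\iota_1(A),\iota_2(A))$ makes it a modular extension of $\mathcal L$. Its atoms are the $(H,\hat0)$ with $H\in\mathrm{At}(\mathcal E_1)\setminus\iota_1(\mathcal L)$, the $(\hat0,H)$ with $H\in\mathrm{At}(\mathcal E_2)\setminus\iota_2(\mathcal L)$, and the $(\iota_1(H),\iota_2(H))$ with $H\in\mathrm{At}(\mathcal L)$, which identifies $\mathrm{At}(\mathcal E_1\cup_{\mathcal L}\mathcal E_2)$ with $\mathrm{At}(\mathcal E_1)\cup_{\mathrm{At}(\mathcal L)}\mathrm{At}(\mathcal E_2)$. The product is $(\mathcal E_1,\iota_1,J_1)\bullet(\mathcal E_2,\iota_2,J_2)=(\mathcal E_1\cup_{\mathcal L}\mathcal E_2,\iota_{12},J_1J_2)$ (concatenated word); it is well defined on $\mathcal{MD}(\mathcal L)$. *)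

From HB Require Import structures.
From mathcomp Require Import all_boot all_order all_algebra.
Set Implicit Arguments. Unset Strict Implicit. Unset Printing Implicit Defensive.
Import GRing.Theory Num.Theory.

(* All lattice operations are *derived* from [le].                           *)
Record rawLat := RawLat { car : finType; le : rel car; bot : car }.

Definition lt (T : rawLat) (x y : car T) := (x != y) && le x y.

Definition is_ub (T : rawLat) (S : {set car T}) (z : car T) :=
  [forall s, (s \in S) ==> le s z].
Definition is_lub (T : rawLat) (S : {set car T}) (z : car T) :=
  is_ub S z && [forall w, is_ub S w ==> le z w].
Definition is_lb (T : rawLat) (S : {set car T}) (z : car T) :=
  [forall s, (s \in S) ==> le z s].
Definition is_glb (T : rawLat) (S : {set car T}) (z : car T) :=
  is_lb S z && [forall w, is_lb S w ==> le w z].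

Definition lub (T : rawLat) (S : {set car T}) : car T :=
  odflt (bot T) [pick z | is_lub S z].
Definition glb (T : rawLat) (S : {set car T}) : car T :=
  odflt (bot T) [pick z | is_glb S z].
Definition join (T : rawLat) (x y : car T) := lub [set x; y].
Definition meet (T : rawLat) (x y : car T) := glb [set x; y].
Definition bigjoin (T : rawLat) (J : seq (car T)) := lub [set x in J].
Definition top (T : rawLat) := lub [set: car T].

Definition cover (T : rawLat) (x y : car T) :=
  lt x y && [forall z, ~~ (lt x z && lt z y)].
Definition satchain (T : rawLat) (x : car T) (s : seq (car T)) (y : car T) :=
  path (@cover T) x s && (last x s == y).

Definition rk (T : rawLat) (F : car T) : nat :=
  \max_(n < #|car T|.+1 | [exists t : n.-tuple (car T), satchain (bot T) t F]) n.

Definition atom (T : rawLat) (a : car T) := cover (bot T) a.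

Definition is_lattice (T : rawLat) :=
  [/\ reflexive (@le T), antisymmetric (@le T), transitive (@le T) &
      (forall x : car T, le (bot T) x)] /\
  (forall x y : car T, exists z, is_lub [set x; y] z) /\
  (forall x y : car T, exists z, is_glb [set x; y] z).

Definition ranked (T : rawLat) :=
  forall (F : car T) (s1 s2 : seq (car T)),
    satchain (bot T) s1 F -> satchain (bot T) s2 F -> size s1 = size s2.

Definition atomic (T : rawLat) :=
  forall F : car T, exists A : {set car T},
    (forall a, a \in A -> atom a) /\ is_lub A F.

Definition semimodular (T : rawLat) :=
  forall F1 F2 : car T, rk (meet F1 F2) + rk (join F1 F2) <= rk F1 + rk F2.

Definition geometric (T : rawLat) :=
  [/\ is_lattice T, ranked T, atomic T & semimodular T].

Definition nontrivial (T : rawLat) := 1 < #|car T|.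

Definition modular_flat (T : rawLat) (F : car T) :=
  forall F' : car T, rk (meet F F') + rk (join F F') = rk F + rk F'.

Definition embedding (T1 T2 : rawLat) (phi : car T1 -> car T2) :=
  [/\ injective phi,
      (forall x y, le x y -> le (phi x) (phi y)),
      (forall x y, phi (join x y) = join (phi x) (phi y)) &
      (forall a, atom a -> atom (phi a))].

Definition modext (L E : rawLat) (iota : car L -> car E) :=
  [/\ geometric E, embedding iota,
      (forall x : car E, (exists A, iota A = x) <-> le x (iota (top L))) &
      modular_flat (iota (top L))].

Record diagram (L : rawLat) := Diagram {
  dE : rawLat; diota : car L -> car dE; dword : seq (car dE) }.
Arguments Diagram {L} dE diota dword.

Definition Fiota (L : rawLat) (G : diagram L) : car (dE G) := diota G (top L).

Definition valid (L : rawLat) (G : diagram L) :=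
  modext (diota G) /\ all (@atom (dE G)) (dword G).

Definition deg (L : rawLat) (G : diagram L) : int :=
  ((size (dword G))%:Z -
   2 * ((rk (bigjoin (dword G)))%:Z - (rk (meet (bigjoin (dword G)) (Fiota G)))%:Z))%R.

Definition swapw (T : Type) (x0 : T) (s : seq T) (i j : nat) :=
  set_nth x0 (set_nth x0 s i (nth x0 s j)) j (nth x0 s i).
Definition dswap (L : rawLat) (G : diagram L) (i j : nat) : diagram L :=
  Diagram (dE G) (diota G) (swapw (bot (dE G)) (dword G) i j).

Definition prodLat (T1 T2 : rawLat) : rawLat :=
  RawLat (fun p q : (car T1 * car T2)%type => le p.1 q.1 && le p.2 q.2)
         (bot T1, bot T2).

Definition lat_iso (T1 T2 : rawLat) (psi : car T1 -> car T2) :=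
  bijective psi /\ forall x y, le x y = le (psi x) (psi y).

Definition rkL (T : rawLat) := rk (top T).

(* Relations R1--R5, encoded through the universal property of the quotient *)
Definition respects (L : rawLat) (V : lmodType rat) (f : diagram L -> V) :=
  [/\
      (forall (G : diagram L) (i j : nat), valid G ->
         i < size (dword G) -> j < size (dword G) -> i != j ->
         f G = (- f (dswap G i j))%R),
      (forall (G G' : diagram L) (phi : car (dE G) -> car (dE G')),
         valid G -> valid G' -> embedding phi -> rkL (dE G) = rkL (dE G') ->
         (forall A, diota G' A = phi (diota G A)) ->
         dword G' = map phi (dword G) -> f G = f G'),
      (forall G : diagram L, valid G ->
         lt (join (Fiota G) (bigjoin (dword G))) (top (dE G)) -> f G = 0%R),
      (forall G : diagram L, valid G ->
         (exists (E1 E2 : rawLat) (psi : car (dE G) -> car (prodLat E1 E2)),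
            [/\ geometric E1, geometric E2, nontrivial E1 & nontrivial E2] /\
            lat_iso psi /\ (psi (Fiota G)).2 = bot E2) ->
         f G = 0%R) &
      (forall G : diagram L, valid G ->
         (exists F : car (dE G), [/\ modular_flat F, le (Fiota G) F &
            count (fun H => ~~ le H F) (dword G) = 2]) ->
         f G = 0%R)].

Definition po_cond (L E1 E2 : rawLat) (i1 : car L -> car E1) (i2 : car L -> car E2)
  (p : (car E1 * car E2)%type) : bool :=
  [exists A, (i1 A == meet p.1 (i1 (top L))) && (i2 A == meet p.2 (i2 (top L)))]
  || (p == (bot E1, bot E2)).
(* The disjunct [p == (bot,bot)] is redundant for modular extensions (it only
   provides a default element for raw data). *)

Lemma po_cond_bot (L E1 E2 : rawLat) (i1 : car L -> car E1) (i2 : car L -> car E2) :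
  po_cond i1 i2 (bot E1, bot E2).
Proof. by rewrite /po_cond eqxx orbT. Qed.

Definition po_bot (L E1 E2 : rawLat) (i1 : car L -> car E1) (i2 : car L -> car E2)
  : {p : (car E1 * car E2)%type | po_cond i1 i2 p} :=
  exist _ (bot E1, bot E2) (po_cond_bot i1 i2).

Definition poLat (L E1 E2 : rawLat) (i1 : car L -> car E1) (i2 : car L -> car E2)
  : rawLat :=
  @RawLat {p : (car E1 * car E2)%type | po_cond i1 i2 p}
    (fun p q => le (val p).1 (val q).1 && le (val p).2 (val q).2)
    (po_bot i1 i2).

Definition po_iota (L E1 E2 : rawLat) (i1 : car L -> car E1) (i2 : car L -> car E2)
  (A : car L) : car (poLat i1 i2) :=
  insubd (po_bot i1 i2) (i1 A, i2 A).

Definition po_inj1 (L E1 E2 : rawLat) (i1 : car L -> car E1) (i2 : car L -> car E2)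
  (H : car E1) : car (poLat i1 i2) :=
  insubd (po_bot i1 i2)
    (match [pick A | i1 A == H] with Some A => (H, i2 A) | None => (H, bot E2) end).
Definition po_inj2 (L E1 E2 : rawLat) (i1 : car L -> car E1) (i2 : car L -> car E2)
  (H : car E2) : car (poLat i1 i2) :=
  insubd (po_bot i1 i2)
    (match [pick A | i2 A == H] with Some A => (i1 A, H) | None => (bot E1, H) end).

Definition dmul (L : rawLat) (G1 G2 : diagram L) : diagram L :=
  Diagram (poLat (diota G1) (diota G2)) (po_iota (diota G1) (diota G2))
    (map (po_inj1 (diota G1) (diota G2)) (dword G1) ++
     map (po_inj2 (diota G1) (diota G2)) (dword G2)).

Definition dunit (L : rawLat) : diagram L := Diagram L id [::].

(* The pushout P = E1 \cup_L E2 is geometric by a rank-function criterion: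
   a lattice with a strictly monotone r, r 0 = 0, and a family S of elements
   of r-value 1 that separates x < y and raises r by at most one under joins,
   is geometric with rank r.  On P take r (x1, x2) = rk x1 + rk x2 - rk A,
   where A in L is the common trace of x1 and x2 on F1 and F2, and for S the
   atoms of E1 and E2 outside L together with the atoms of L.  The modular
   rank identities of F1 and F2 then yield the modularity of F_iota in P and
   the additivity of rk J - rk (J /\ F_iota), hence of degrees.
   Associativity, commutativity and the unit come from the lattice
   isomorphisms (E1 \cup E2) \cup E3 = E1 \cup (E2 \cup E3),
   E2 \cup E1 = E1 \cup E2 and E \cup_L L = E, which respect iota and the
   words, so that R2 identifies the diagrams.  For commutativity the two
   words differ by exchanging the blocks J1 and J2, which costs the sign
   (-1)^(|J1| |J2|) by R1; it equals (-1)^(deg G1 deg G2) since a degree has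
   the parity of the length of its word. *)

From Pilot Require Import Defs.
From HB Require Import structures.
From mathcomp Require Import all_boot all_order all_algebra.
From mathcomp Require Import zify.
Import GRing.Theory.
Set Implicit Arguments. Unset Strict Implicit. Unset Printing Implicit Defensive.

Section Lattice.
Variable T : rawLat.
Hypothesis HT : is_lattice T.
Implicit Types x y z w : car T.

Lemma le_refl x : le x x. Proof. by case: HT => [[]]. Qed.
Lemma le_trans x y z : le x y -> le y z -> le x z.
Proof. by case: HT => [[_ _ t _] _] ; apply: t. Qed.
Lemma le_anti x y : le x y -> le y x -> x = y.
Proof. by case: HT => [[_ a _ _] _] h1 h2; apply: a; rewrite h1 h2. Qed.
Lemma le0x x : le (bot T) x. Proof. by case: HT => [[]]. Qed.

Lemma is_ubP (S : {set car T}) z : reflect (forall s, s \in S -> le s z) (is_ub S z).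
Proof. exact: forall_inP. Qed.
Lemma is_lbP (S : {set car T}) z : reflect (forall s, s \in S -> le z s) (is_lb S z).
Proof. exact: forall_inP. Qed.

Lemma is_lubP (S : {set car T}) z :
  reflect ((forall s, s \in S -> le s z) /\ (forall w, (forall s, s \in S -> le s w) -> le z w))
          (is_lub S z).
Proof.
apply: (iffP andP) => [[/is_ubP h /forallP h2]|[h1 h2]]; split => //.
  by move=> w /is_ubP hw; move: (h2 w); rewrite hw.
  by apply/is_ubP.
by apply/forallP => w; apply/implyP => /is_ubP; apply: h2.
Qed.
Lemma is_glbP (S : {set car T}) z :
  reflect ((forall s, s \in S -> le z s) /\ (forall w, (forall s, s \in S -> le w s) -> le w z))
          (is_glb S z).
Proof.
apply: (iffP andP) => [[/is_lbP h /forallP h2]|[h1 h2]]; split => //.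
  by move=> w /is_lbP hw; move: (h2 w); rewrite hw.
  by apply/is_lbP.
by apply/forallP => w; apply/implyP => /is_lbP; apply: h2.
Qed.

Lemma is_lub_uniq (S : {set car T}) a b : is_lub S a -> is_lub S b -> a = b.
Proof.
move=> /is_lubP [ha1 ha2] /is_lubP [hb1 hb2].
by apply: le_anti; [apply: ha2 | apply: hb2].
Qed.
Lemma is_glb_uniq (S : {set car T}) a b : is_glb S a -> is_glb S b -> a = b.
Proof.
move=> /is_glbP [ha1 ha2] /is_glbP [hb1 hb2].
by apply: le_anti; [apply: hb2 | apply: ha2].
Qed.

Lemma lubE (S : {set car T}) z : is_lub S z -> lub S = z.
Proof.
move=> h; rewrite /lub; case: pickP => [z' /= hz'|/(_ z)]; last by rewrite h.
exact: is_lub_uniq hz' h.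
Qed.
Lemma glbE (S : {set car T}) z : is_glb S z -> glb S = z.
Proof.
move=> h; rewrite /glb; case: pickP => [z' /= hz'|/(_ z)]; last by rewrite h.
exact: is_glb_uniq hz' h.
Qed.

Lemma is_lub_join x y : is_lub [set x; y] (join x y).
Proof.
case: HT => _ [hj _]; case: (hj x y) => z hz.
by rewrite /join (lubE hz).
Qed.
Lemma is_glb_meet x y : is_glb [set x; y] (meet x y).
Proof.
case: HT => _ [_ hm]; case: (hm x y) => z hz.
by rewrite /meet (glbE hz).
Qed.

Lemma leUl x y : le x (join x y).
Proof. by case/is_lubP: (is_lub_join x y) => h _; apply: h; rewrite !inE eqxx. Qed.
Lemma leUr x y : le y (join x y).
Proof. by case/is_lubP: (is_lub_join x y) => h _; apply: h; rewrite !inE eqxx orbT. Qed.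
Lemma join_le x y z : le x z -> le y z -> le (join x y) z.
Proof.
move=> hx hy; case/is_lubP: (is_lub_join x y) => _ h; apply: h => s.
by rewrite !inE => /orP [] /eqP ->.
Qed.
Lemma leIl x y : le (meet x y) x.
Proof. by case/is_glbP: (is_glb_meet x y) => h _; apply: h; rewrite !inE eqxx. Qed.
Lemma leIr x y : le (meet x y) y.
Proof. by case/is_glbP: (is_glb_meet x y) => h _; apply: h; rewrite !inE eqxx orbT. Qed.
Lemma le_meet x y z : le z x -> le z y -> le z (meet x y).
Proof.
move=> hx hy; case/is_glbP: (is_glb_meet x y) => _ h; apply: h => s.
by rewrite !inE => /orP [] /eqP ->.
Qed.

Lemma joinE x y z : le x z -> le y z -> (forall w, le x w -> le y w -> le z w) -> join x y = z.
Proof. move=> h1 h2 h3; apply: le_anti; [exact: join_le | exact: h3 (leUl _ _) (leUr _ _)]. Qed.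
Lemma meetE x y z : le z x -> le z y -> (forall w, le w x -> le w y -> le w z) -> meet x y = z.
Proof. move=> h1 h2 h3; apply: le_anti; [exact: h3 (leIl _ _) (leIr _ _) | exact: le_meet]. Qed.

Lemma join_r x y : le x y -> join x y = y.
Proof. move=> h; apply: joinE => [||w h1 h2] //; exact: le_refl. Qed.
Lemma join_l x y : le y x -> join x y = x.
Proof. move=> h; apply: joinE => [||w h1 h2] //; exact: le_refl. Qed.
Lemma meet_l x y : le x y -> meet x y = x.
Proof. move=> h; apply: meetE => [||w h1 h2] //; exact: le_refl. Qed.
Lemma meet_r x y : le y x -> meet x y = y.
Proof. move=> h; apply: meetE => [||w h1 h2] //; exact: le_refl. Qed.
Lemma joinC x y : join x y = join y x.
Proof. by apply: joinE; [apply: leUr | apply: leUl | move=> w h1 h2; apply: join_le]. Qed.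
Lemma meetC x y : meet x y = meet y x.
Proof. by apply: meetE; [apply: leIr | apply: leIl | move=> w h1 h2; apply: le_meet]. Qed.
Lemma leEjoin x y : le x y = (join x y == y).
Proof. by apply/idP/eqP => [/join_r //|<-]; apply: leUl. Qed.
Lemma leU2 x y x' y' : le x x' -> le y y' -> le (join x y) (join x' y').
Proof.
move=> h1 h2; apply: join_le; [apply: le_trans h1 (leUl _ _)|apply: le_trans h2 (leUr _ _)].
Qed.
Lemma leI2 x y x' y' : le x x' -> le y y' -> le (meet x y) (meet x' y').
Proof.
move=> h1 h2; apply: le_meet; [apply: le_trans (leIl _ _) h1|apply: le_trans (leIr _ _) h2].
Qed.
Lemma joinA x y z : join x (join y z) = join (join x y) z.
Proof.
apply: le_anti; apply: join_le.
- exact: le_trans (leUl x y) (leUl _ z).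
- apply: join_le; [exact: le_trans (leUr x y) (leUl _ z)|exact: leUr].
- apply: join_le; [exact: leUl|exact: le_trans (leUl y z) (leUr x _)].
- exact: le_trans (leUr y z) (leUr x _).
Qed.
Lemma join0x x : join (bot T) x = x. Proof. exact/join_r/le0x. Qed.
Lemma joinx0 x : join x (bot T) = x. Proof. exact/join_l/le0x. Qed.

Lemma is_lub_foldr (s : seq (car T)) : is_lub [set x in s] (foldr (@join T) (bot T) s).
Proof.
elim: s => [|a s IH] /=.
  apply/is_lubP; split => [x|w _]; [by rewrite inE|exact: le0x].
case/is_lubP: IH => h1 h2; apply/is_lubP; split.
  move=> x; rewrite !inE => /orP [/eqP ->|hx]; first exact: leUl.
  by apply: le_trans (h1 x _) (leUr _ _); rewrite inE.
move=> w hw; apply: join_le; first by apply: hw; rewrite !inE eqxx.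
by apply: h2 => x hx; apply: hw; rewrite !inE; rewrite inE in hx; rewrite hx orbT.
Qed.
Lemma bigjoinE (s : seq (car T)) : bigjoin s = foldr (@join T) (bot T) s.
Proof. exact: lubE (is_lub_foldr s). Qed.
Lemma is_lub_lub (S : {set car T}) : is_lub S (lub S).
Proof.
have -> : S = [set x in enum S] by apply/setP => x; rewrite !inE mem_enum.
by rewrite (lubE (is_lub_foldr _)); apply: is_lub_foldr.
Qed.
Lemma le_top x : le x (top T).
Proof. by case/is_lubP: (is_lub_lub [set: car T]) => h _; apply: h; rewrite inE. Qed.
Lemma bigjoin_cat (s1 s2 : seq (car T)) : bigjoin (s1 ++ s2) = join (bigjoin s1) (bigjoin s2).
Proof.
rewrite !bigjoinE; elim: s1 => [|a s IH] /=; first by rewrite join0x.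
by rewrite IH joinA.
Qed.

Lemma ltW x y : lt x y -> le x y. Proof. by case/andP. Qed.
Lemma lt_neq x y : lt x y -> x != y. Proof. by case/andP. Qed.
Lemma le_neq_lt x y : le x y -> x != y -> lt x y. Proof. by move=> h1 h2; apply/andP. Qed.
Lemma lt_trans x y z : lt x y -> lt y z -> lt x z.
Proof.
move=> /andP [n1 l1] /andP [n2 l2]; apply/andP; split; last exact: le_trans l1 l2.
apply/eqP => e; subst z; move/eqP: n1; apply; exact: le_anti l1 l2.
Qed.
Lemma ltxx x : lt x x = false. Proof. by rewrite /lt eqxx. Qed.

Lemma lt_meet_l x y : ~~ le x y -> lt (meet x y) x.
Proof.
move=> hxy; apply: le_neq_lt; first exact: leIl.
by apply: contraNneq hxy => <-; apply: leIr.
Qed.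

Lemma meetI_distr x y F : meet (meet x y) F = meet (meet x F) (meet y F).
Proof.
apply: le_anti; apply: le_meet.
- exact: leI2 (leIl _ _) (le_refl F).
- exact: leI2 (leIr _ _) (le_refl F).
- exact: leI2 (leIl _ _) (leIl _ _).
- exact: le_trans (leIr _ _) (leIr _ _).
Qed.

End Lattice.

Section Ranked.
Variable T : rawLat.
Hypothesis HT : is_lattice T.
Implicit Types x y z w : car T.

Lemma exists_minimal (D : {set car T}) z0 : z0 \in D ->
  exists2 z, z \in D & forall w, w \in D -> ~~ lt w z.
Proof.
move=> hz0.
case: (arg_minnP (fun z => #|[set w | lt w z]|) hz0) => z hz hmin.
exists z => // w hw; apply/negP => hwz.
have := hmin w hw; apply/negP; rewrite -ltnNge.
apply: proper_card; apply/properP; split.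
  apply/subsetP => v; rewrite !inE => hv. exact: (lt_trans HT hv hwz).
by exists w; rewrite !inE ?hwz // ltxx.
Qed.

Lemma exists_satchain x y : le x y -> exists s, satchain x s y.
Proof.
move=> hxy; have [n hn] := ubnP #|[set w | lt x w && le w y]|.
elim: n x hxy hn => // n IH x hxy hn.
case: (eqVneq x y) => [<-|nxy]; first by exists [::]; rewrite /satchain /= eqxx.
have hy : y \in [set w | lt x w && le w y] by rewrite inE (le_neq_lt hxy nxy) le_refl.
case: (exists_minimal hy) => z; rewrite inE => /andP [hxz hzy] hmin.
have hcov : Defs.cover x z.
  apply/andP; split => //; apply/forallP => w; apply/negP => /andP [h1 h2].
  by move: (hmin w); rewrite inE h1 (le_trans HT (ltW h2) hzy) /= h2 => /(_ isT).
have hsub : #|[set w | lt z w && le w y]| < #|[set w | lt x w && le w y]|.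
  apply: proper_card; apply/properP; split.
    apply/subsetP => v; rewrite !inE => /andP [h1 h2].
    by rewrite (lt_trans HT hxz h1) h2.
  by exists z; rewrite !inE ?hxz ?hzy // ltxx.
case: (IH z hzy (leq_trans hsub hn)) => s /andP [hp hl].
by exists (z :: s); rewrite /satchain /= hcov hp hl.
Qed.

Lemma cover_lt x y : Defs.cover x y -> lt x y. Proof. by case/andP. Qed.

Lemma satchain_size x s y : satchain x s y -> size s < #|car T|.
Proof.
case/andP => hp _.
have hs : sorted (@lt T) (x :: s).
  by apply: sub_path hp => a b; apply: cover_lt.
have ltT : transitive (@lt T) by move=> b a c h1 h2; exact: (lt_trans HT h1 h2).
have ltI : irreflexive (@lt T) by move=> a; exact: ltxx.
have hu : uniq (x :: s) := sorted_uniq ltT ltI hs.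
by move/card_uniqP: hu => /= <-; apply: max_card.
Qed.

Lemma satchain_cat x s y s' z : satchain x s y -> satchain y s' z -> satchain x (s ++ s') z.
Proof.
case/andP => h1 /eqP h2 /andP [h3 h4].
by rewrite /satchain cat_path last_cat h2 h1 h3.
Qed.

Hypothesis Hr : ranked T.

Lemma rk_satchain F s : satchain (bot T) s F -> rk F = size s.
Proof.
move=> hs; apply/eqP; rewrite eqn_leq; apply/andP; split.
  apply/bigmax_leqP => i /existsP [t ht].
  by rewrite -(Hr ht hs) size_tuple.
have hi : size s < #|car T|.+1 by apply: ltnW; rewrite ltnS; apply: satchain_size hs.
apply: (@leq_bigmax_cond _ _ _ (Ordinal hi)) => /=.
by apply/existsP; exists (in_tuple s).
Qed.

Lemma rk0 : rk (bot T) = 0.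
Proof. by rewrite (@rk_satchain _ [::]) // /satchain /= eqxx. Qed.

Lemma rk_cover x y : Defs.cover x y -> rk y = (rk x).+1.
Proof.
move=> hc; case: (exists_satchain (le0x HT x)) => s hs.
rewrite (rk_satchain hs) (@rk_satchain y (rcons s y)) ?size_rcons //.
case/andP: hs => hp /eqP hl.
by rewrite /satchain rcons_path last_rcons hp hl hc eqxx.
Qed.

Lemma rk_lt x y : lt x y -> rk x < rk y.
Proof.
move=> hxy; case: (exists_satchain (le0x HT x)) => s hs.
case: (exists_satchain (ltW hxy)) => s' hs'.
rewrite (rk_satchain hs) (rk_satchain (satchain_cat hs hs')) size_cat -addn1 leq_add2l.
case: s' hs' => [|a s'] //; case/andP => _ /= /eqP e.
by move: (lt_neq hxy); rewrite e eqxx.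
Qed.

Lemma rk_le x y : le x y -> rk x <= rk y.
Proof.
move=> h; case: (eqVneq x y) => [->//|n].
exact/ltnW/rk_lt/le_neq_lt.
Qed.

Lemma le_rk_eq x y : le x y -> rk y <= rk x -> x = y.
Proof.
move=> h e; case: (eqVneq x y) => [//|n].
by have := rk_lt (le_neq_lt h n); rewrite ltnNge e.
Qed.

Lemma rk_atom (a : car T) : atom a -> rk a = 1.
Proof. by move/rk_cover; rewrite rk0. Qed.

Lemma rk1_atom (a : car T) : rk a = 1 -> atom a.
Proof.
move=> h; apply/andP; split.
  apply: le_neq_lt; first exact: le0x.
  by apply/eqP => e; move: h; rewrite -e rk0.
apply/forallP => z; apply/negP => /andP [h1 h2].
by have := rk_lt h1; have := rk_lt h2; rewrite rk0 h; case: (rk z).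
Qed.

End Ranked.

Lemma rk_cover_preserving (T1 T2 : rawLat) (phi : car T1 -> car T2) :
  is_lattice T1 -> ranked T1 -> is_lattice T2 -> ranked T2 ->
  phi (bot T1) = bot T2 -> (forall x y, Defs.cover x y -> Defs.cover (phi x) (phi y)) ->
  forall x, rk (phi x) = rk x.
Proof.
move=> HT1 HrT1 HT2 HrT2 phi0 phi_cover x.
case: (exists_satchain HT1 (le0x HT1 x)) => s /andP [hp /eqP hl].
rewrite (@rk_satchain _ HT1 HrT1 x s) -?(size_map phi s); last by rewrite /satchain hp hl eqxx.
apply: (rk_satchain HT2 HrT2); rewrite /satchain -phi0 last_map hl eqxx andbT.
by elim: s (bot T1) hp {hl} => [|a s IH] b //= /andP [/phi_cover -> /IH].
Qed.

Section Geometric.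
Variable T : rawLat.
Hypothesis HG : geometric T.
Let HT : is_lattice T. Proof. by case: HG. Qed.
Let Hr : ranked T. Proof. by case: HG. Qed.
Let Ha : atomic T. Proof. by case: HG. Qed.
Let Hs : semimodular T. Proof. by case: HG. Qed.
Implicit Types x y z w : car T.

Lemma geometric_lattice : is_lattice T. Proof. exact: HT. Qed.
Lemma geometric_ranked : ranked T. Proof. exact: Hr. Qed.

Lemma exists_atom_sep x y : lt x y -> exists a, [/\ atom a, le a y & ~~ le a x].
Proof.
move=> hxy; case: (Ha y) => A [hA /is_lubP [h1 h2]].
case: (boolP [forall a in A, le a x]) => [/forall_inP hall|].
  by have := h2 x hall => hyx; move: (lt_neq hxy); rewrite (le_anti HT (ltW hxy) hyx) eqxx.
move/forall_inPn => [a ha hna]; exists a; split => //; [exact: hA|exact: h1].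
Qed.

Lemma meet_atom_eq0 a x : atom a -> ~~ le a x -> meet x a = bot T.
Proof.
move=> ha hna; case: (eqVneq (meet x a) (bot T)) => // ne.
case/andP: ha => _ /forallP /(_ (meet x a)); rewrite /lt eq_sym ne le0x //=.
rewrite leIr // andbT; move/negbNE => /eqP e.
by move: hna; rewrite -e leIl.
Qed.

Lemma rk_join_atom_le a x : atom a -> rk (join x a) <= (rk x).+1.
Proof.
move=> ha; case: (boolP (le a x)) => hax.
  by rewrite join_l // leqnSn.
have := Hs x a; rewrite meet_atom_eq0 // rk0 // (rk_atom HT Hr ha).
by rewrite add0n addn1.
Qed.

(* [<=] is clear; the ranks agree by modularity of [F] at [x] and [join x p]
   and semimodularity. *)
Lemma modular_law F x p : modular_flat F -> le p F -> meet (join x p) F = join (meet x F) p.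
Proof.
move=> hF hpF.
set y := join (meet x F) p; set w := meet (join x p) F.
have hyw : le y w.
  apply: join_le => //; apply: le_meet => //.
  - exact: (le_trans HT (leIl HT x F) (leUl HT x p)).
  - exact: leIr.
  - exact: leUr.
have e1 := hF (join x p).
have e2 := hF x.
have e3 := Hs y x.
have hjF : join F (join x p) = join F x.
  apply: le_anti => //.
    apply: join_le => //; first exact: leUl.
    by apply: join_le => //; [exact: leUr|exact: (le_trans HT hpF (leUl HT F x))].
  apply: join_le => //; first exact: leUl.
  exact: (le_trans HT (leUl HT x p) (leUr HT F (join x p))).
have hyx : join y x = join x p.
  apply: le_anti => //.
    apply: join_le => //; last exact: leUl.
    by apply: join_le => //; [exact: (le_trans HT (leIl HT x F) (leUl HT x p))|exact: leUr].
  apply: join_le => //; first exact: leUr.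
  exact: (le_trans HT (leUr HT (meet x F) p) (leUl HT y x)).
have hmy : rk (meet x F) <= rk (meet y x).
  apply: rk_le => //; apply: le_meet => //; [exact: leUl|exact: leIl].
rewrite hjF (meetC HT F) in e1; rewrite (meetC HT F) in e2.
rewrite hyx in e3.
have hwy : rk w <= rk y by rewrite /w; lia.
by symmetry; apply: le_rk_eq.
Qed.

End Geometric.

Section ModularExtension.
Variables L E : rawLat.
Hypothesis HL : geometric L.
Variable i : car L -> car E.
Hypothesis Hm : modext i.
Let HE : geometric E. Proof. by case: Hm. Qed.
Let HLl : is_lattice L. Proof. by case: HL. Qed.
Let HEl : is_lattice E. Proof. by case: HE. Qed.
Let Hemb : embedding i. Proof. by case: Hm. Qed.
Let Hinj : injective i. Proof. by case: Hemb. Qed.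
Let Hjoin : forall A B, i (join A B) = join (i A) (i B). Proof. by case: Hemb. Qed.
Let Himg : forall x, (exists A, i A = x) <-> le x (i (top L)). Proof. by case: Hm. Qed.
Let Hmod : modular_flat (i (top L)). Proof. by case: Hm. Qed.

Definition Fi := i (top L).

Lemma le_iota A B : le (i A) (i B) = le A B.
Proof.
rewrite (leEjoin HEl) (leEjoin HLl) -Hjoin.
by apply/eqP/eqP => [/Hinj|->].
Qed.
Lemma iota_inj : injective i. Proof. exact: Hinj. Qed.
Lemma iota_join A B : i (join A B) = join (i A) (i B). Proof. exact: Hjoin. Qed.
Lemma iota_le_Fi A : le (i A) Fi. Proof. by rewrite le_iota; apply: le_top. Qed.
Lemma le_Fi_iota x : le x Fi -> exists A, i A = x. Proof. by move/Himg. Qed.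
Lemma iota0 : i (bot L) = bot E.
Proof.
case: (le_Fi_iota (le0x HEl Fi)) => A hA.
apply: (le_anti HEl); last exact: le0x.
by rewrite -hA le_iota le0x.
Qed.
Lemma iota_meet A B : i (meet A B) = meet (i A) (i B).
Proof.
have : le (meet (i A) (i B)) Fi by exact: (le_trans HEl (leIl HEl (i A) (i B)) (iota_le_Fi A)).
case/le_Fi_iota => C hC; rewrite -hC.
apply: (le_anti HEl).
  by rewrite hC; apply: le_meet => //; rewrite le_iota; [exact: leIl|exact: leIr].
rewrite le_iota; apply: le_meet => //; rewrite -le_iota hC; [exact: leIl|exact: leIr].
Qed.
Lemma lt_iota A B : lt (i A) (i B) = lt A B.
Proof. by rewrite /lt le_iota (inj_eq Hinj). Qed.
Lemma iota_cover A B : Defs.cover A B -> Defs.cover (i A) (i B).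
Proof.
case/andP => h1 /forallP h2; apply/andP; split; first by rewrite lt_iota.
apply/forallP => z; apply/negP => /andP [hz1 hz2].
have : le z Fi by exact: (le_trans HEl (ltW hz2) (iota_le_Fi B)).
case/le_Fi_iota => C hC; subst z.
by move: (h2 C); rewrite -!lt_iota hz1 hz2.
Qed.
Lemma rk_iota A : rk (i A) = rk A.
Proof.
exact: (rk_cover_preserving HLl (geometric_ranked HL) HEl (geometric_ranked HE) iota0 iota_cover).
Qed.

(* The paper's [iota^-1 (x /\ F_iota)]; the default [bot L] is never returned. *)
Definition lproj (x : car E) : car L := odflt (bot L) [pick A | i A == meet x Fi].

Lemma iota_lproj x : i (lproj x) = meet x Fi.
Proof.
rewrite /lproj; case: pickP => [A /eqP //|h].
case: (le_Fi_iota (leIr HEl x Fi)) => A hA.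
by move: (h A); rewrite hA eqxx.
Qed.
Lemma lproj_iota A : lproj (i A) = A.
Proof. by apply: Hinj; rewrite iota_lproj meet_l // iota_le_Fi. Qed.
Lemma lproj_le x y : le x y -> le (lproj x) (lproj y).
Proof. by move=> h; rewrite -le_iota !iota_lproj; apply: leI2 => //; apply: le_refl. Qed.
Lemma le_iota_lproj x : le (i (lproj x)) x. Proof. by rewrite iota_lproj leIl. Qed.
Lemma lproj_ge A x : le (i A) x -> le A (lproj x).
Proof. by move=> h; rewrite -le_iota iota_lproj; apply: le_meet => //; apply: iota_le_Fi. Qed.
Lemma rk_lproj x : rk (lproj x) = rk (meet x Fi). Proof. by rewrite -rk_iota iota_lproj. Qed.
Lemma lproj0 : lproj (bot E) = bot L. Proof. by rewrite -iota0 lproj_iota. Qed.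
Lemma lproj_atom H : atom H -> ~~ le H Fi -> lproj H = bot L.
Proof. by move=> ha hn; apply: Hinj; rewrite iota_lproj iota0 (meetC HEl) meet_atom_eq0. Qed.
Lemma lprojE x A : meet x Fi = i A -> lproj x = A.
Proof. by move=> e; apply: Hinj; rewrite iota_lproj. Qed.
Lemma modular_law_Fi x A : meet (join x (i A)) Fi = join (meet x Fi) (i A).
Proof. by apply: modular_law => //; apply: iota_le_Fi. Qed.
Lemma rk_modular_Fi x : rk (meet x Fi) + rk (join x Fi) = rk Fi + rk x.
Proof. by rewrite (meetC HEl) (joinC HEl); apply: Hmod. Qed.
Lemma lproj_join_iota x A : lproj (join x (i A)) = join (lproj x) A.
Proof. by apply: lprojE; rewrite modular_law_Fi -iota_lproj iota_join. Qed.

Lemma rk_join_iota x A : rk (join x (i A)) + rk (meet x Fi) = rk x + rk (join (lproj x) A).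
Proof.
have m1 := rk_modular_Fi (join x (i A)); have m2 := rk_modular_Fi x.
rewrite -iota_lproj lproj_join_iota rk_iota in m1.
rewrite -(joinA HEl) (join_r HEl (iota_le_Fi A)) in m1.
lia.
Qed.

End ModularExtension.

Section RankFunction.
Variable T : rawLat.
Hypothesis HT : is_lattice T.
Variable r : car T -> nat.
Variable S : car T -> Prop.
Hypothesis r0 : r (bot T) = 0.
Hypothesis r_lt : forall x y, lt x y -> r x < r y.
Hypothesis r_sep : forall x y, lt x y -> exists a, [/\ S a, le a y & ~~ le a x].
Hypothesis r_join : forall w a, S a -> r (join w a) <= (r w).+1.
Hypothesis r_S : forall a, S a -> r a = 1.
Implicit Types x y z w : car T.

Lemma rank_fun_le x y : le x y -> r x <= r y.
Proof. by move=> h; case: (eqVneq x y) => [->//|n]; apply/ltnW/r_lt/le_neq_lt. Qed.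

Lemma rank_fun_cover x y : Defs.cover x y -> r y = (r x).+1.
Proof.
move=> hc; have hxy := cover_lt hc.
case: (r_sep hxy) => a [hS hay hax].
have hz : le (join x a) y by apply: join_le => //; exact: ltW.
have hxz : lt x (join x a).
  apply: le_neq_lt; first exact: leUl.
  by apply/eqP => e; move: hax; rewrite e leUr.
have e : join x a = y.
  case: (eqVneq (join x a) y) => // ne.
  by case/andP: hc => _ /forallP /(_ (join x a)); rewrite hxz (le_neq_lt hz ne).
have := r_join x hS; rewrite e => h; have := r_lt hxy; lia.
Qed.

Lemma rank_fun_satchain x s y : satchain x s y -> r y = r x + size s.
Proof.
elim: s x => [|a s IH] x /andP [/= hp /eqP hl]; first by rewrite -hl addn0.
case/andP: hp => hc hp.
rewrite (IH a); last by apply/andP; split => //; apply/eqP.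
by rewrite (rank_fun_cover hc) addSnnS.
Qed.

Lemma rank_fun_ranked : ranked T.
Proof.
by move=> F s1 s2 /rank_fun_satchain h1 /rank_fun_satchain h2; move: h1 h2; rewrite r0 !add0n => <-.
Qed.

Lemma rank_fun_rk x : rk x = r x.
Proof.
case: (exists_satchain HT (le0x HT x)) => s hs.
by rewrite (rk_satchain HT rank_fun_ranked hs) (rank_fun_satchain hs) r0.
Qed.

Lemma rank_fun_atom a : S a -> atom a.
Proof. by move=> h; apply: (rk1_atom HT rank_fun_ranked); rewrite rank_fun_rk r_S. Qed.

(* Induction on [r p - r (meet p q)]: adding to [q] an atom below [p] but not
   below [meet p q] increases [r (meet p q)] and leaves [join p q] unchanged. *)
Lemma rank_fun_semimodular : semimodular T.
Proof.
move=> p q; rewrite !rank_fun_rk.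
have [k hk] : exists k, r p - r (meet p q) <= k by exists (r p - r (meet p q)).
elim: k q hk => [|k IH] q hk; case: (boolP (le p q)) => hpq;
  try by rewrite meet_l // join_r.
all: have hlt := lt_meet_l HT hpq; have := r_lt hlt.
  lia.
case: (r_sep hlt) => a [hS hap han].
set q' := join q a.
have hlt2 : lt (meet p q) (meet p q').
  apply: le_neq_lt; first by apply: leI2 => //; [exact: le_refl|exact: leUl].
  by apply: contraNneq han => ->; apply: le_meet => //; exact: leUr.
have r1 := r_lt hlt2.
have r2 : r (meet p q') <= r p by apply: rank_fun_le; exact: leIl.
have hj : join p q' = join p q.
  by rewrite /q' joinA //; apply: join_l => //; exact: (le_trans HT hap (leUl HT p q)).
have : r (meet p q') + r (join p q) <= r p + r q' by rewrite -hj; apply: IH; lia.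
have := r_join q hS; rewrite -/q'; lia.
Qed.

Lemma rank_fun_atomic : atomic T.
Proof.
move=> F; exists [set a | atom a && le a F]; split.
  by move=> a; rewrite inE => /andP [].
apply/is_lubP; split.
  by move=> a; rewrite inE => /andP [].
move=> w hw; apply/negPn/negP => /(lt_meet_l HT) hlt.
case: (r_sep hlt) => a [hS haF han].
have haw : le a w by apply: hw; rewrite inE (rank_fun_atom hS) haF.
by move: han; rewrite (le_meet HT haF haw).
Qed.

Lemma rank_fun_geometric : geometric T.
Proof.
split; [exact: HT|exact: rank_fun_ranked|exact: rank_fun_atomic|exact: rank_fun_semimodular].
Qed.

End RankFunction.

Section Pushout.
Variables L E1 E2 : rawLat.
Hypothesis HL : geometric L.
Variable i1 : car L -> car E1.
Variable i2 : car L -> car E2.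
Hypothesis M1 : modext i1.
Hypothesis M2 : modext i2.
Let G1 : geometric E1. Proof. by case: M1. Qed.
Let G2 : geometric E2. Proof. by case: M2. Qed.
Let HLl : is_lattice L. Proof. by case: HL. Qed.
Let HE1 : is_lattice E1. Proof. by case: G1. Qed.
Let HE2 : is_lattice E2. Proof. by case: G2. Qed.
Let HrL : ranked L. Proof. by case: HL. Qed.
Let Hr1 : ranked E1. Proof. by case: G1. Qed.
Let Hr2 : ranked E2. Proof. by case: G2. Qed.

Local Notation P := (poLat i1 i2).
Local Notation F1 := (Fi i1).
Local Notation F2 := (Fi i2).
Local Notation A1 := (lproj i1).
Local Notation A2 := (lproj i2).

Lemma po_condE x : po_cond i1 i2 x = (A1 x.1 == A2 x.2).
Proof.
rewrite /po_cond; apply/idP/eqP.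
  case/orP => [/existsP [A /andP [/eqP h1 /eqP h2]]|/eqP ->].
    by rewrite (lprojE M1 (esym h1)) (lprojE M2 (esym h2)).
  by rewrite /= (lproj0 HL M1) (lproj0 HL M2).
move=> h; apply/orP; left; apply/existsP; exists (A1 x.1).
by rewrite {1}(iota_lproj M1) h (iota_lproj M2) !eqxx.
Qed.

Definition pmk (x1 : car E1) (x2 : car E2) : car P := insubd (po_bot i1 i2) (x1, x2).

Lemma val_pmk x1 x2 : A1 x1 = A2 x2 -> val (pmk x1 x2) = (x1, x2).
Proof. by move=> h; rewrite val_insubd po_condE /= h eqxx. Qed.

Lemma lproj_pair (p : car P) : A1 (val p).1 = A2 (val p).2.
Proof. by apply/eqP; rewrite -po_condE; apply: valP. Qed.

Lemma pmk_val (p : car P) : pmk (val p).1 (val p).2 = p.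
Proof. by apply: val_inj; rewrite val_pmk ?lproj_pair //; case: (val p). Qed.

Definition pproj (p : car P) := A1 (val p).1.
Lemma pproj2 p : pproj p = A2 (val p).2. Proof. exact: lproj_pair. Qed.


Lemma lproj1_meet x y : A1 (meet x y) = meet (A1 x) (A1 y).
Proof. by apply: (lprojE M1); rewrite (iota_meet HL M1) !(iota_lproj M1) meetI_distr. Qed.
Lemma lproj2_meet x y : A2 (meet x y) = meet (A2 x) (A2 y).
Proof. by apply: (lprojE M2); rewrite (iota_meet HL M2) !(iota_lproj M2) meetI_distr. Qed.

(* The componentwise join can leave [P], its two traces on [L] may differ; adding
   the join of these traces to both components makes them agree (modular law). *)
Definition pjoin_proj (p q : car P) : car L :=
  join (A1 (join (val p).1 (val q).1)) (A2 (join (val p).2 (val q).2)).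
Definition pjoin (p q : car P) : car P :=
  pmk (join (join (val p).1 (val q).1) (i1 (pjoin_proj p q)))
     (join (join (val p).2 (val q).2) (i2 (pjoin_proj p q))).

Lemma lproj1_pjoin p q :
  A1 (join (join (val p).1 (val q).1) (i1 (pjoin_proj p q))) = pjoin_proj p q.
Proof.
apply: (lprojE M1); rewrite (modular_law_Fi HL M1) -(iota_lproj M1) -(iota_join M1); congr i1.
by apply: join_r => //; apply: leUl.
Qed.
Lemma lproj2_pjoin p q :
  A2 (join (join (val p).2 (val q).2) (i2 (pjoin_proj p q))) = pjoin_proj p q.
Proof.
apply: (lprojE M2); rewrite (modular_law_Fi HL M2) -(iota_lproj M2) -(iota_join M2); congr i2.
by apply: join_r => //; apply: leUr.
Qed.
Lemma val_pjoin p q : val (pjoin p q) =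
  (join (join (val p).1 (val q).1) (i1 (pjoin_proj p q)),
   join (join (val p).2 (val q).2) (i2 (pjoin_proj p q))).
Proof. by rewrite val_pmk // lproj1_pjoin lproj2_pjoin. Qed.
Lemma pproj_pjoin p q : pproj (pjoin p q) = pjoin_proj p q.
Proof. by rewrite /pproj val_pjoin lproj1_pjoin. Qed.

Lemma is_lub_pjoin p q : is_lub [set p; q] (pjoin p q).
Proof.
apply/is_lubP; split.
  move=> s; rewrite !inE => /orP [] /eqP -> /=; rewrite val_pjoin /=; apply/andP; split.
  - exact: (le_trans HE1 (leUl HE1 _ _) (leUl HE1 _ _)).
  - exact: (le_trans HE2 (leUl HE2 _ _) (leUl HE2 _ _)).
  - exact: (le_trans HE1 (leUr HE1 _ _) (leUl HE1 _ _)).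
  - exact: (le_trans HE2 (leUr HE2 _ _) (leUl HE2 _ _)).
move=> w hw.
have /andP [h11 h12] : le p w by apply: hw; rewrite !inE eqxx.
have /andP [h21 h22] : le q w by apply: hw; rewrite !inE eqxx orbT.
have hu : le (join (val p).1 (val q).1) (val w).1 by apply: join_le.
have hv : le (join (val p).2 (val q).2) (val w).2 by apply: join_le.
have hm : le (pjoin_proj p q) (pproj w).
  apply: join_le => //; first exact: (lproj_le HL M1).
  by rewrite pproj2; apply: (lproj_le HL M2).
rewrite /= val_pjoin /=; apply/andP; split; apply: join_le => //.
  by apply: (le_trans HE1 _ (le_iota_lproj M1 (val w).1)); rewrite (le_iota HL M1).
by apply: (le_trans HE2 _ (le_iota_lproj M2 (val w).2)); rewrite (le_iota HL M2) -pproj2.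
Qed.

Definition pmeet (p q : car P) : car P := pmk (meet (val p).1 (val q).1) (meet (val p).2 (val q).2).
Lemma val_pmeet p q : val (pmeet p q) = (meet (val p).1 (val q).1, meet (val p).2 (val q).2).
Proof. by rewrite val_pmk // lproj1_meet lproj2_meet !lproj_pair. Qed.

Lemma is_glb_pmeet p q : is_glb [set p; q] (pmeet p q).
Proof.
apply/is_glbP; split.
  move=> s; rewrite !inE => /orP [] /eqP -> /=; rewrite val_pmeet /=; apply/andP; split;
  first [exact: leIl | exact: leIr].
move=> w hw.
have /andP [h11 h12] : le w p by apply: hw; rewrite !inE eqxx.
have /andP [h21 h22] : le w q by apply: hw; rewrite !inE eqxx orbT.
by rewrite /= val_pmeet /=; apply/andP; split; apply: le_meet.
Qed.

Lemma po_lattice : is_lattice P.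
Proof.
split; last split.
- split.
  + by move=> p /=; rewrite !le_refl.
  + move=> p q /andP [/andP [a1 a2] /andP [b1 b2]]; apply: val_inj.
    case: (val p) (val q) a1 a2 b1 b2 => [x1 x2] [y1 y2] /= a1 a2 b1 b2.
    by rewrite (le_anti HE1 a1 b1) (le_anti HE2 a2 b2).
  + move=> q p s /andP [a1 a2] /andP [b1 b2].
    by rewrite /= (le_trans HE1 a1 b1) (le_trans HE2 a2 b2).
  + by move=> p /=; rewrite !le0x.
- by move=> x y; exists (pjoin x y); apply: is_lub_pjoin.
- by move=> x y; exists (pmeet x y); apply: is_glb_pmeet.
Qed.
Let HP := po_lattice.

Lemma po_joinE p q : join p q = pjoin p q. Proof. exact: lubE (is_lub_pjoin p q). Qed.
Lemma po_meetE p q : meet p q = pmeet p q. Proof. exact: glbE (is_glb_pmeet p q). Qed.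

(* The common trace [pproj p] on [L] is counted once. *)
Definition prk (p : car P) : nat := rk (val p).1 + rk (val p).2 - rk (pproj p).

Let Hs1 : semimodular E1. Proof. by case: G1. Qed.
Let Hs2 : semimodular E2. Proof. by case: G2. Qed.
Let iat2 : forall a, atom a -> atom (i2 a). Proof. by case: M2 => _ [_ _ _ h]. Qed.

Lemma rk_pproj1 p : rk (pproj p) <= rk (val p).1.
Proof. by rewrite -(rk_iota HL M1); apply: (rk_le HE1 Hr1); apply: (le_iota_lproj M1). Qed.
Lemma rk_pproj2 p : rk (pproj p) <= rk (val p).2.
Proof. by rewrite pproj2 -(rk_iota HL M2); apply: (rk_le HE2 Hr2); apply: (le_iota_lproj M2). Qed.

Definition patom (q : car P) : Prop :=
  (exists e, [/\ atom e, ~~ le e F1 & q = pmk e (bot E2)]) \/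
  (exists e, [/\ atom e, ~~ le e F2 & q = pmk (bot E1) e]) \/
  (exists t, atom t /\ q = pmk (i1 t) (i2 t)).

Lemma val_pmk1 e : atom e -> ~~ le e F1 -> val (pmk e (bot E2)) = (e, bot E2).
Proof. by move=> ha hn; rewrite val_pmk // (lproj_atom HL M1 ha hn) (lproj0 HL M2). Qed.
Lemma val_pmk2 e : atom e -> ~~ le e F2 -> val (pmk (bot E1) e) = (bot E1, e).
Proof. by move=> ha hn; rewrite val_pmk // (lproj_atom HL M2 ha hn) (lproj0 HL M1). Qed.
Lemma val_pmk_iota t : val (pmk (i1 t) (i2 t)) = (i1 t, i2 t).
Proof. by rewrite val_pmk // (lproj_iota HL M1) (lproj_iota HL M2). Qed.

Lemma prk0 : prk (bot P) = 0.
Proof. by rewrite /prk /pproj /= !(rk0 HE1 Hr1) (rk0 HE2 Hr2). Qed.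

Lemma prk_patom q : patom q -> prk q = 1.
Proof.
case=> [[e [ha hn ->]]|[[e [ha hn ->]]|[t [ha ->]]]]; rewrite /prk /pproj.
- by rewrite val_pmk1 //= (lproj_atom HL M1 ha hn) (rk0 HLl HrL) (rk0 HE2 Hr2) (rk_atom HE1 Hr1 ha).
- by rewrite val_pmk2 //= (lproj0 HL M1) (rk0 HLl HrL) (rk0 HE1 Hr1) (rk_atom HE2 Hr2 ha).
- by rewrite val_pmk_iota /= (lproj_iota HL M1) !(rk_iota HL) // (rk_atom HLl HrL ha).
Qed.

Lemma prk_lt p q : lt p q -> prk p < prk q.
Proof.
move=> /andP [ne /andP [l1 l2]].
have a1 := rk_pproj1 p; have a2 := rk_pproj2 p; have b1 := rk_pproj1 q; have b2 := rk_pproj2 q.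
rewrite /prk; case: (eqVneq (val p).1 (val q).1) => e1.
  have eA : pproj p = pproj q by rewrite /pproj e1.
  have e2 : (val p).2 != (val q).2.
    apply: contra ne => /eqP e2; apply/eqP; apply: val_inj.
    by case: (val p) (val q) e1 e2 => [x1 x2] [y1 y2] /= -> ->.
  have := rk_lt HE2 Hr2 (le_neq_lt l2 e2); rewrite eA e1 in a2 *; lia.
have h1 := rk_lt HE1 Hr1 (le_neq_lt l1 e1).
have m1 := rk_modular_Fi M2 (val p).2; have m2 := rk_modular_Fi M2 (val q).2.
rewrite -!(rk_lproj HL M2) -!pproj2 in m1 m2.
have : rk (join (val p).2 F2) <= rk (join (val q).2 F2).
  by apply: (rk_le HE2 Hr2); apply: leU2 => //; apply: le_refl.
lia.
Qed.

(* The separating atom comes from [E2] if the first components agree, from [E1]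
   if the traces on [L] agree, and from [L] otherwise. *)
Lemma patom_sep p q : lt p q -> exists a, [/\ patom a, le a q & ~~ le a p].
Proof.
move=> /andP [ne /andP [l1 l2]].
case: (eqVneq (val p).1 (val q).1) => e1.
  have e2 : (val p).2 != (val q).2.
    apply: contra ne => /eqP e2; apply/eqP; apply: val_inj.
    by case: (val p) (val q) e1 e2 => [x1 x2] [y1 y2] /= -> ->.
  case: (exists_atom_sep G2 (le_neq_lt l2 e2)) => e [ha hey hex].
  have hn : ~~ le e F2.
    apply: contra hex => heF.
    have : le e (meet (val q).2 F2) by apply: le_meet.
    rewrite -(iota_lproj M2) -pproj2 /pproj -e1 -/(pproj p) pproj2 => h.
    exact: (le_trans HE2 h (le_iota_lproj M2 _)).
  exists (pmk (bot E1) e); split; first by right; left; exists e.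
    by rewrite /= val_pmk2 //= hey (le0x HE1).
  by rewrite /= val_pmk2 //= negb_and hex orbT.
case: (eqVneq (pproj p) (pproj q)) => eA.
  case: (exists_atom_sep G1 (le_neq_lt l1 e1)) => e [ha hey hex].
  have hn : ~~ le e F1.
    apply: contra hex => heF.
    have : le e (meet (val q).1 F1) by apply: le_meet.
    rewrite -(iota_lproj M1) -/(pproj q) -eA => h.
    exact: (le_trans HE1 h (le_iota_lproj M1 _)).
  exists (pmk e (bot E2)); split; first by left; exists e.
    by rewrite /= val_pmk1 //= hey (le0x HE2).
  by rewrite /= val_pmk1 //= negb_and hex.
have hA : le (pproj p) (pproj q) by apply: (lproj_le HL M1).
case: (exists_atom_sep HL (le_neq_lt hA eA)) => t [ha htq htp].
exists (pmk (i1 t) (i2 t)); split; first by right; right; exists t.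
  rewrite /= val_pmk_iota /=; apply/andP; split.
    by apply: (le_trans HE1 _ (le_iota_lproj M1 (val q).1)); rewrite (le_iota HL M1).
  by apply: (le_trans HE2 _ (le_iota_lproj M2 (val q).2)); rewrite (le_iota HL M2) -pproj2.
rewrite /= val_pmk_iota /= negb_and; apply/orP; left.
by apply: contra htp => /(lproj_ge HL M1).
Qed.

Lemma prk_join_out1 w e : atom e -> ~~ le e F1 ->
  prk (join w (pmk e (bot E2))) <= (prk w).+1.
Proof.
move=> ha hn; rewrite po_joinE.
have a1 := rk_pproj1 w; have a2 := rk_pproj2 w.
set u := join (val w).1 e; set a := A1 u.
have hm : pjoin_proj w (pmk e (bot E2)) = a.
  rewrite /pjoin_proj val_pmk1 //= joinx0 // -pproj2; apply: join_l => //.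
  by apply: (lproj_le HL M1); apply: leUl.
have hv : val (pjoin w (pmk e (bot E2))) = (u, join (val w).2 (i2 a)).
  rewrite val_pjoin hm val_pmk1 //= joinx0 //; congr pair; apply: join_l => //.
  exact: (le_iota_lproj M1).
rewrite /prk {1}/pproj hv /= -/a.
have r1 : rk u <= (rk (val w).1).+1 by apply: rk_join_atom_le.
have r2 := Hs2 (val w).2 (i2 a).
have r3 : rk (pproj w) <= rk (meet (val w).2 (i2 a)).
  rewrite -(rk_iota HL M2); apply: (rk_le HE2 Hr2); rewrite pproj2; apply: le_meet => //.
    exact: (le_iota_lproj M2).
  by rewrite (le_iota HL M2) -pproj2; apply: (lproj_le HL M1); apply: leUl.
have r4 : rk a <= rk (join (val w).2 (i2 a)).
  by rewrite -(rk_iota HL M2); apply: (rk_le HE2 Hr2); apply: leUr.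
rewrite (rk_iota HL M2) in r2.
rewrite /= in a1 a2 r1 r2 r3 r4; lia.
Qed.

Lemma prk_join_out2 w e : atom e -> ~~ le e F2 ->
  prk (join w (pmk (bot E1) e)) <= (prk w).+1.
Proof.
move=> ha hn; rewrite po_joinE.
have a1 := rk_pproj1 w; have a2 := rk_pproj2 w.
set v := join (val w).2 e; set b := A2 v.
have hm : pjoin_proj w (pmk (bot E1) e) = b.
  rewrite /pjoin_proj val_pmk2 //= joinx0 // -/(pproj w) pproj2; apply: join_r => //.
  by apply: (lproj_le HL M2); apply: leUl.
have hv : val (pjoin w (pmk (bot E1) e)) = (join (val w).1 (i1 b), v).
  rewrite val_pjoin hm val_pmk2 //= joinx0 //; congr pair; apply: join_l => //.
  exact: (le_iota_lproj M2).
have hA : pproj (pjoin w (pmk (bot E1) e)) = b by rewrite pproj_pjoin.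
rewrite /prk hA hv /=.
have r1 : rk v <= (rk (val w).2).+1 by apply: rk_join_atom_le.
have r2 := Hs1 (val w).1 (i1 b).
have r3 : rk (pproj w) <= rk (meet (val w).1 (i1 b)).
  rewrite -(rk_iota HL M1); apply: (rk_le HE1 Hr1); apply: le_meet => //.
    exact: (le_iota_lproj M1).
  by rewrite (le_iota HL M1) pproj2; apply: (lproj_le HL M2); apply: leUl.
have r4 : rk b <= rk v.
  by rewrite -(rk_iota HL M2); apply: (rk_le HE2 Hr2); apply: (le_iota_lproj M2).
rewrite (rk_iota HL M1) in r2.
rewrite /= in a1 a2 r1 r2 r3 r4 *; lia.
Qed.

Lemma prk_join_iota w t : atom t -> prk (join w (pmk (i1 t) (i2 t))) <= (prk w).+1.
Proof.
move=> ha; rewrite po_joinE.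
have a1 := rk_pproj1 w; have a2 := rk_pproj2 w.
set u := join (val w).1 (i1 t); set v := join (val w).2 (i2 t).
have hu : A1 u = join (pproj w) t by rewrite (lproj_join_iota HL M1).
have hv : A2 v = join (pproj w) t by rewrite (lproj_join_iota HL M2) -pproj2.
have hval : val (pjoin w (pmk (i1 t) (i2 t))) = (u, v).
  rewrite val_pjoin /pjoin_proj val_pmk_iota /= -/u -/v hu hv (join_l HLl (le_refl HLl _)).
  congr pair; apply: join_l => //.
    by rewrite -hu; apply: (le_iota_lproj M1).
  by rewrite -hv; apply: (le_iota_lproj M2).
rewrite /prk {1}/pproj hval /= hu.
have r1 : rk v <= (rk (val w).2).+1 by apply: rk_join_atom_le => //; apply: iat2.
have := rk_join_iota HL M1 (val w).1 t; rewrite -(rk_lproj HL M1) -/u -/(pproj w).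
rewrite /= in a1 a2 r1 *; lia.
Qed.

Lemma prk_join_patom w q : patom q -> prk (join w q) <= (prk w).+1.
Proof.
case=> [[e [ha hn ->]]|[[e [ha hn ->]]|[t [ha ->]]]].
- exact: prk_join_out1.
- exact: prk_join_out2.
- exact: prk_join_iota.
Qed.

Lemma po_geometric : geometric P.
Proof.
apply: (rank_fun_geometric HP (r := prk) (S := patom)).
- exact: prk0.
- exact: prk_lt.
- exact: patom_sep.
- exact: prk_join_patom.
- exact: prk_patom.
Qed.

Lemma po_rk p : rk p = prk p.
Proof.
exact: (rank_fun_rk HP prk0 prk_lt patom_sep prk_join_patom p).
Qed.


Let HrP : ranked P. Proof. by case: po_geometric. Qed.

Local Notation pio := (po_iota i1 i2).

Lemma val_po_iota A : val (pio A) = (i1 A, i2 A). Proof. exact: val_pmk_iota. Qed.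
Lemma pproj_po_iota A : pproj (pio A) = A.
Proof. by rewrite /pproj val_po_iota (lproj_iota HL M1). Qed.
Lemma prk_po_iota A : prk (pio A) = rk A.
Proof. rewrite /prk pproj_po_iota val_po_iota /= !(rk_iota HL) //; lia. Qed.

Lemma po_iota_join A B : pio (join A B) = join (pio A) (pio B).
Proof.
apply: val_inj; rewrite po_joinE val_pjoin /pjoin_proj !val_po_iota /=.
rewrite -(iota_join M1) -(iota_join M2).
rewrite (lproj_iota HL M1) (lproj_iota HL M2) (join_l HLl (le_refl HLl (join A B))).
by rewrite (join_l HE1 (le_refl HE1 _)) (join_l HE2 (le_refl HE2 _)).
Qed.

Lemma meet_po_Fi (y : car P) : meet (pio (top L)) y = pio (pproj y).
Proof.
apply: val_inj; rewrite po_meetE val_pmeet !val_po_iota /=.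
by rewrite (meetC HE1) (meetC HE2) -(iota_lproj M1) -(iota_lproj M2) -pproj2.
Qed.

Lemma val_join_po_Fi (y :
  car P) : val (join (pio (top L)) y) = (join F1 (val y).1, join F2 (val y).2).
Proof.
have e1 : A1 (join F1 (val y).1) = top L.
  by apply: (lprojE M1); apply: meet_r => //; apply: leUl.
have e2 : A2 (join F2 (val y).2) = top L.
  by apply: (lprojE M2); apply: meet_r => //; apply: leUl.
rewrite po_joinE val_pjoin /pjoin_proj !val_po_iota /= e1 e2 (join_l HLl (le_refl HLl (top L))).
by congr pair; apply: join_l => //; apply: leUl.
Qed.

Lemma po_iota_embedding : embedding pio.
Proof.
split.
- by move=> A B /(congr1 val); rewrite !val_po_iota => -[] /(iota_inj M1).
- by move=> A B h; rewrite /= !val_po_iota /= !(le_iota HL) // h.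
- exact: po_iota_join.
- move=> A ha; apply: (rk1_atom HP HrP).
  by rewrite po_rk prk_po_iota (rk_atom HLl HrL ha).
Qed.

Lemma le_po_Fi x : (exists A, pio A = x) <-> le x (pio (top L)).
Proof.
split; first by case=> A <-; rewrite /= !val_po_iota /= !(le_iota HL) // le_top.
rewrite /= val_po_iota /= => /andP [h1 h2]; exists (pproj x); apply: val_inj.
rewrite val_po_iota {1}/pproj (iota_lproj M1) pproj2 (iota_lproj M2).
by rewrite (meet_l HE1 h1) (meet_l HE2 h2) -surjective_pairing.
Qed.

Lemma po_Fi_modular : modular_flat (pio (top L)).
Proof.
move=> y.
have e1 : A1 (join F1 (val y).1) = top L.
  by apply: (lprojE M1); apply: meet_r => //; apply: leUl.
have m1 := rk_modular_Fi M1 (val y).1; have m2 := rk_modular_Fi M2 (val y).2.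
rewrite -(rk_lproj HL M1) (joinC HE1) (rk_iota HL M1) in m1.
rewrite -(rk_lproj HL M2) (joinC HE2) (rk_iota HL M2) -pproj2 in m2.
have a1 := rk_pproj1 y; have a2 := rk_pproj2 y.
rewrite !po_rk meet_po_Fi !prk_po_iota /prk /pproj !val_join_po_Fi.
rewrite /pproj /= in e1 m1 m2 a1 a2 *.
rewrite e1; lia.
Qed.

Lemma po_modext : modext pio.
Proof.
split; [exact: po_geometric|exact: po_iota_embedding|exact: le_po_Fi|exact: po_Fi_modular].
Qed.

Definition pinl (x : car E1) : car P := pmk x (i2 (A1 x)).
Definition pinr (x : car E2) : car P := pmk (i1 (A2 x)) x.
Lemma val_pinl x : val (pinl x) = (x, i2 (A1 x)).
Proof. by rewrite val_pmk // (lproj_iota HL M2). Qed.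
Lemma val_pinr x : val (pinr x) = (i1 (A2 x), x).
Proof. by rewrite val_pmk // (lproj_iota HL M1). Qed.
Lemma pproj_pinl x : pproj (pinl x) = A1 x. Proof. by rewrite /pproj val_pinl. Qed.
Lemma pproj_pinr x : pproj (pinr x) = A2 x.
Proof. by rewrite /pproj val_pinr /= (lproj_iota HL M1). Qed.

Lemma po_inj1E H : atom H -> po_inj1 i1 i2 H = pinl H.
Proof.
move=> ha; rewrite /po_inj1 /pinl /pmk; case: pickP => [A /eqP hA|hn].
  by rewrite -hA (lproj_iota HL M1).
have hF : ~~ le H F1.
  apply/negP => /(le_Fi_iota M1) [A hA]; by move: (hn A); rewrite hA eqxx.
by rewrite (lproj_atom HL M1 ha hF) (iota0 HL M2).
Qed.
Lemma po_inj2E H : atom H -> po_inj2 i1 i2 H = pinr H.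
Proof.
move=> ha; rewrite /po_inj2 /pinr /pmk; case: pickP => [A /eqP hA|hn].
  by rewrite -hA (lproj_iota HL M2).
have hF : ~~ le H F2.
  apply/negP => /(le_Fi_iota M2) [A hA]; by move: (hn A); rewrite hA eqxx.
by rewrite (lproj_atom HL M2 ha hF) (iota0 HL M1).
Qed.

Lemma prk_pinl x : prk (pinl x) = rk x.
Proof. by rewrite /prk pproj_pinl val_pinl /= (rk_iota HL M2); lia. Qed.
Lemma prk_pinr x : prk (pinr x) = rk x.
Proof. by rewrite /prk pproj_pinr val_pinr /= (rk_iota HL M1); lia. Qed.

Lemma pinl_atom H : atom H -> atom (pinl H).
Proof. by move=> ha; apply: (rk1_atom HP HrP); rewrite po_rk prk_pinl (rk_atom HE1 Hr1 ha). Qed.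
Lemma pinr_atom H : atom H -> atom (pinr H).
Proof. by move=> ha; apply: (rk1_atom HP HrP); rewrite po_rk prk_pinr (rk_atom HE2 Hr2 ha). Qed.

Lemma pinl_join x y : pinl (join x y) = join (pinl x) (pinl y).
Proof.
apply: val_inj; rewrite po_joinE val_pjoin /pjoin_proj !val_pinl /=.
rewrite -(iota_join M2) (lproj_iota HL M2).
have hle : le (join (A1 x) (A1 y)) (A1 (join x y)).
  by apply: join_le => //; apply: (lproj_le HL M1); [apply: leUl|apply: leUr].
rewrite (join_l HLl hle) (join_l HE1 (le_iota_lproj M1 _)) (join_r HE2) //.
by rewrite (le_iota HL M2).
Qed.
Lemma pinr_join x y : pinr (join x y) = join (pinr x) (pinr y).
Proof.
apply: val_inj; rewrite po_joinE val_pjoin /pjoin_proj !val_pinr /=.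
rewrite -(iota_join M1) (lproj_iota HL M1).
have hle : le (join (A2 x) (A2 y)) (A2 (join x y)).
  by apply: join_le => //; apply: (lproj_le HL M2); [apply: leUl|apply: leUr].
rewrite (join_r HLl hle) (join_l HE2 (le_iota_lproj M2 _)) (join_r HE1) //.
by rewrite (le_iota HL M1).
Qed.
Lemma pinl0 : pinl (bot E1) = bot P.
Proof. by apply: val_inj; rewrite val_pinl (lproj0 HL M1) (iota0 HL M2). Qed.
Lemma pinr0 : pinr (bot E2) = bot P.
Proof. by apply: val_inj; rewrite val_pinr (lproj0 HL M2) (iota0 HL M1). Qed.

Lemma pinl_bigjoin s : bigjoin (map pinl s) = pinl (bigjoin s).
Proof.
rewrite (bigjoinE HP) (bigjoinE HE1); elim: s => [|a s IH] /=; first by rewrite pinl0.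
by rewrite IH pinl_join.
Qed.
Lemma pinr_bigjoin s : bigjoin (map pinr s) = pinr (bigjoin s).
Proof.
rewrite (bigjoinE HP) (bigjoinE HE2); elim: s => [|a s IH] /=; first by rewrite pinr0.
by rewrite IH pinr_join.
Qed.

Lemma map_po_inj1 J : all (@atom E1) J -> map (po_inj1 i1 i2) J = map pinl J.
Proof. by move=> /allP h; apply/eq_in_map => H /h; apply: po_inj1E. Qed.
Lemma map_po_inj2 J : all (@atom E2) J -> map (po_inj2 i1 i2) J = map pinr J.
Proof. by move=> /allP h; apply/eq_in_map => H /h; apply: po_inj2E. Qed.

Lemma val_join_pinl_pinr j1 j2 :
  val (join (pinl j1) (pinr j2)) = (join j1 (i1 (A2 j2)), join (i2 (A1 j1)) j2).
Proof.
have hu : A1 (join j1 (i1 (A2 j2))) = join (A1 j1) (A2 j2) by apply: (lproj_join_iota HL M1).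
have hv : A2 (join (i2 (A1 j1)) j2) = join (A1 j1) (A2 j2).
  by rewrite (joinC HE2) (lproj_join_iota HL M2) (joinC HLl).
rewrite po_joinE val_pjoin /pjoin_proj val_pinl val_pinr /= hu hv.
rewrite (join_l HLl (le_refl HLl _)); congr pair; apply: join_l => //.
  by rewrite -hu; apply: (le_iota_lproj M1).
by rewrite -hv; apply: (le_iota_lproj M2).
Qed.

Lemma rk_join_pinl_pinr j1 j2 :
  rk (join (pinl j1) (pinr j2)) + rk (meet j1 F1) + rk (meet j2 F2) =
  rk (meet (join (pinl j1) (pinr j2)) (pio (top L))) + rk j1 + rk j2.
Proof.
rewrite (meetC HP) meet_po_Fi !po_rk prk_po_iota /prk /pproj val_join_pinl_pinr /=.
rewrite (lproj_join_iota HL M1).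
have r1 := rk_join_iota HL M1 j1 (A2 j2).
have r2 := rk_join_iota HL M2 j2 (A1 j1).
rewrite (joinC HE2) (joinC HLl (A2 j2)) in r2.
have m1 : rk (meet j1 F1) <= rk j1 by apply: (rk_le HE1 Hr1); apply: leIl.
lia.
Qed.

Lemma lproj_po_iota p : lproj pio p = pproj p.
Proof. by apply: (lprojE po_modext); rewrite /Fi (meetC HP) meet_po_Fi. Qed.

End Pushout.


Section Isomorphism.
Variables T1 T2 : rawLat.
Hypotheses (HT1 : is_lattice T1) (HT2 : is_lattice T2).
Hypotheses (HrT1 : ranked T1) (HrT2 : ranked T2).
Variable phi : car T1 -> car T2.
Variable psi : car T2 -> car T1.
Hypothesis phiK : cancel phi psi.
Hypothesis psiK : cancel psi phi.
Hypothesis le_phi : forall x y, le x y = le (phi x) (phi y).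

Lemma iso0 : phi (bot T1) = bot T2.
Proof.
apply: (le_anti HT2); last exact: le0x.
by rewrite -(psiK (bot T2)) -le_phi le0x.
Qed.

Lemma iso_join x y : phi (join x y) = join (phi x) (phi y).
Proof.
apply: (le_anti HT2).
  rewrite -(psiK (join (phi x) (phi y))) -le_phi.
  by apply: join_le => //; rewrite le_phi psiK; [apply: leUl|apply: leUr].
by apply: join_le => //; rewrite -le_phi; [apply: leUl|apply: leUr].
Qed.

Lemma iso_lt x y : lt (phi x) (phi y) = lt x y.
Proof. by rewrite /lt -le_phi (inj_eq (can_inj phiK)). Qed.

Lemma iso_cover x y : Defs.cover x y -> Defs.cover (phi x) (phi y).
Proof.
case/andP => h1 /forallP h2; apply/andP; split; first by rewrite iso_lt.
apply/forallP => z; rewrite -(psiK z) !iso_lt; exact: h2.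
Qed.

Lemma iso_atom a : atom a -> atom (phi a).
Proof. by rewrite /atom -iso0; apply: iso_cover. Qed.

Lemma iso_rk x : rk (phi x) = rk x.
Proof. exact: (rk_cover_preserving HT1 HrT1 HT2 HrT2 iso0 iso_cover). Qed.

Lemma iso_top : phi (top T1) = top T2.
Proof.
apply: (le_anti HT2); first exact: le_top.
by rewrite -(psiK (top T2)) -le_phi le_top.
Qed.

Lemma iso_rkL : rkL T1 = rkL T2.
Proof. by rewrite /rkL -iso_top iso_rk. Qed.

Lemma iso_embedding : embedding phi.
Proof.
split; first exact: can_inj phiK.
- by move=> x y; rewrite le_phi.
- exact: iso_join.
- exact: iso_atom.
Qed.

End Isomorphism.

Lemma id_modext L : geometric L -> modext (fun x : car L => x).
Proof.
move=> HL; have HLl := geometric_lattice HL.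
split => //.
- by split.
- by move=> x; split=> [[A <-]|_]; [apply: le_top|exists x].
- by move=> F; rewrite meetC // meet_l ?le_top // join_l ?le_top // addnC.
Qed.

Lemma lproj_id L (HL : geometric L) (y : car L) : lproj (fun x : car L => x) y = y.
Proof.
have HLl := geometric_lattice HL.
by apply: (lprojE (id_modext HL)); rewrite /Fi meet_l // le_top.
Qed.

Section Swap.
Variables L E1 E2 : rawLat.
Hypothesis HL : geometric L.
Variables (i1 : car L -> car E1) (i2 : car L -> car E2).
Hypotheses (M1 : modext i1) (M2 : modext i2).

Definition po_swap (p : car (poLat i2 i1)) : car (poLat i1 i2) := pmk i1 i2 (val p).2 (val p).1.
Definition po_unswap (p : car (poLat i1 i2)) : car (poLat i2 i1) := pmk i2 i1 (val p).2 (val p).1.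

Lemma val_po_swap p : val (po_swap p) = ((val p).2, (val p).1).
Proof. by rewrite (val_pmk HL M1 M2) // (lproj_pair HL M2 M1 p). Qed.
Lemma val_po_unswap p : val (po_unswap p) = ((val p).2, (val p).1).
Proof. by rewrite (val_pmk HL M2 M1) // (lproj_pair HL M1 M2 p). Qed.

Lemma po_swapK : cancel po_swap po_unswap.
Proof. by move=> p; apply: val_inj; rewrite val_po_unswap val_po_swap; case: (val p). Qed.
Lemma po_unswapK : cancel po_unswap po_swap.
Proof. by move=> p; apply: val_inj; rewrite val_po_swap val_po_unswap; case: (val p). Qed.

Lemma le_po_swap p q : le p q = le (po_swap p) (po_swap q).
Proof. by rewrite /= !val_po_swap /= andbC. Qed.

Lemma po_swap_iota A : po_iota i1 i2 A = po_swap (po_iota i2 i1 A).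
Proof. by apply: val_inj; rewrite val_po_swap (val_po_iota HL M1 M2) (val_po_iota HL M2 M1). Qed.
Lemma po_swap_pinl x : po_swap (pinl i2 i1 x) = pinr i1 i2 x.
Proof. by apply: val_inj; rewrite val_po_swap (val_pinl HL M2 M1) (val_pinr HL M1 M2). Qed.
Lemma po_swap_pinr x : po_swap (pinr i2 i1 x) = pinl i1 i2 x.
Proof. by apply: val_inj; rewrite val_po_swap (val_pinr HL M2 M1) (val_pinl HL M1 M2). Qed.

End Swap.

Section Assoc.
Variables L E1 E2 E3 : rawLat.
Hypothesis HL : geometric L.
Variables (i1 : car L -> car E1) (i2 : car L -> car E2) (i3 : car L -> car E3).
Hypotheses (M1 : modext i1) (M2 : modext i2) (M3 : modext i3).
Let M12 := po_modext HL M1 M2.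
Let M23 := po_modext HL M2 M3.
Local Notation P12 := (poLat i1 i2).
Local Notation P23 := (poLat i2 i3).
Local Notation Pl := (poLat (po_iota i1 i2) i3).
Local Notation Pr := (poLat i1 (po_iota i2 i3)).

Definition po_assoc (q : car Pl) : car Pr :=
  pmk i1 (po_iota i2 i3) (val (val q).1).1 (pmk i2 i3 (val (val q).1).2 (val q).2).
Definition po_unassoc (p : car Pr) : car Pl :=
  pmk (po_iota i1 i2) i3 (pmk i1 i2 (val p).1 (val (val p).2).1) (val (val p).2).2.

Lemma lproj23_assoc (q : car Pl) : lproj i2 (val (val q).1).2 = lproj i3 (val q).2.
Proof.
by rewrite -(lproj_pair HL M12 M3 q) (lproj_po_iota HL M1 M2) (pproj2 HL M1 M2).
Qed.

Lemma val_pmk23 (q :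
  car Pl) : val (pmk i2 i3 (val (val q).1).2 (val q).2) = ((val (val q).1).2, (val q).2).
Proof. by rewrite (val_pmk HL M2 M3) // lproj23_assoc. Qed.

Lemma val_po_assoc (q :
  car Pl) : val (po_assoc q) = ((val (val q).1).1, pmk i2 i3 (val (val q).1).2 (val q).2).
Proof.
rewrite /po_assoc (val_pmk HL M1 M23) // (lproj_po_iota HL M2 M3) /pproj val_pmk23 /=.
exact: (lproj_pair HL M1 M2).
Qed.

Lemma lproj12_unassoc (p : car Pr) : lproj i1 (val p).1 = lproj i2 (val (val p).2).1.
Proof. by rewrite (lproj_pair HL M1 M23 p) (lproj_po_iota HL M2 M3). Qed.

Lemma val_pmk12 (p :
  car Pr) : val (pmk i1 i2 (val p).1 (val (val p).2).1) = ((val p).1, (val (val p).2).1).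
Proof. by rewrite (val_pmk HL M1 M2) // lproj12_unassoc. Qed.

Lemma val_po_unassoc (p :
  car Pr) : val (po_unassoc p) = (pmk i1 i2 (val p).1 (val (val p).2).1, (val (val p).2).2).
Proof.
rewrite /po_unassoc (val_pmk HL M12 M3) // (lproj_po_iota HL M1 M2) /pproj val_pmk12 /=.
rewrite lproj12_unassoc.
exact: (lproj_pair HL M2 M3).
Qed.

Lemma po_assocK : cancel po_assoc po_unassoc.
Proof.
move=> q; apply: val_inj; rewrite val_po_unassoc val_po_assoc /= val_pmk23 /=.
rewrite (pmk_val HL M1 M2); by case: (val q).
Qed.

Lemma po_unassocK : cancel po_unassoc po_assoc.
Proof.
move=> p; apply: val_inj; rewrite val_po_assoc val_po_unassoc /= val_pmk12 /=.
rewrite (pmk_val HL M2 M3); by case: (val p).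
Qed.

Lemma le_po_assoc x y : le x y = le (po_assoc x) (po_assoc y).
Proof. by rewrite /= !val_po_assoc /= !val_pmk23 /= andbA. Qed.

Lemma po_assoc_pinl_pinl x :
  po_assoc (pinl (po_iota i1 i2) i3 (pinl i1 i2 x)) = pinl i1 (po_iota i2 i3) x.
Proof.
apply: val_inj; rewrite val_po_assoc (val_pinl HL M1 M23) (val_pinl HL M12 M3) /=.
by rewrite (val_pinl HL M1 M2) /= (lproj_po_iota HL M1 M2) (pproj_pinl HL M1 M2).
Qed.

Lemma po_assoc_pinl_pinr x :
  po_assoc (pinl (po_iota i1 i2) i3 (pinr i1 i2 x)) = pinr i1 (po_iota i2 i3) (pinl i2 i3 x).
Proof.
apply: val_inj; rewrite val_po_assoc (val_pinr HL M1 M23).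
rewrite (val_pinl HL M12 M3) /= (val_pinr HL M1 M2) /=.
rewrite (lproj_po_iota HL M1 M2) (pproj_pinr HL M1 M2).
by rewrite (lproj_po_iota HL M2 M3) (pproj_pinl HL M2 M3).
Qed.

Lemma po_assoc_pinr x :
  po_assoc (pinr (po_iota i1 i2) i3 x) = pinr i1 (po_iota i2 i3) (pinr i2 i3 x).
Proof.
apply: val_inj; rewrite val_po_assoc (val_pinr HL M1 M23).
rewrite (val_pinr HL M12 M3) /= (val_po_iota HL M1 M2) /=.
by rewrite (lproj_po_iota HL M2 M3) (pproj_pinr HL M2 M3).
Qed.

Lemma po_assoc_iota A : po_iota i1 (po_iota i2 i3) A = po_assoc (po_iota (po_iota i1 i2) i3 A).
Proof.
apply: val_inj; rewrite val_po_assoc (val_po_iota HL M1 M23).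
by rewrite (val_po_iota HL M12 M3) /= (val_po_iota HL M1 M2).
Qed.

End Assoc.

Section Product.
Variable L : rawLat.
Hypothesis HL : geometric L.

Lemma dmulE E1 E2 (i1 : car L -> car E1) (i2 : car L -> car E2) w1 w2 :
  valid (Diagram E1 i1 w1) -> valid (Diagram E2 i2 w2) ->
  dmul (Diagram E1 i1 w1) (Diagram E2 i2 w2) =
  Diagram (poLat i1 i2) (po_iota i1 i2) (map (pinl i1 i2) w1 ++ map (pinr i1 i2) w2).
Proof.
by case=> M1 a1 [M2 a2]; rewrite /dmul /= (map_po_inj1 HL M1 M2 a1) (map_po_inj2 HL M1 M2 a2).
Qed.

Lemma valid_dmul (G1 G2 : diagram L) : valid G1 -> valid G2 -> valid (dmul G1 G2).
Proof.
case: G1 G2 => [E1 i1 w1] [E2 i2 w2] h1 h2; rewrite dmulE //.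
case: h1 h2 => M1 a1 [M2 a2]; split; first exact: po_modext.
rewrite all_cat !all_map; apply/andP; split; apply/allP => H hH /=.
  exact/(pinl_atom HL M1 M2)/(allP a1).
exact/(pinr_atom HL M1 M2)/(allP a2).
Qed.

Lemma valid_dunit : valid (dunit L).
Proof. by split => //; apply: id_modext. Qed.

Lemma deg_dmul (G1 G2 : diagram L) : valid G1 -> valid G2 ->
  deg (dmul G1 G2) = (deg G1 + deg G2)%R.
Proof.
case: G1 G2 => [E1 i1 w1] [E2 i2 w2] h1 h2; rewrite dmulE //.
case: h1 h2 => M1 _ [M2 _]; rewrite /deg /Fiota /=.
rewrite (bigjoin_cat (po_lattice HL M1 M2)) (pinl_bigjoin HL M1 M2) (pinr_bigjoin HL M1 M2).
have := rk_join_pinl_pinr HL M1 M2 (bigjoin w1) (bigjoin w2).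
rewrite /Fi /= size_cat !size_map; lia.
Qed.

Lemma deg_dunit : deg (dunit L) = 0%R.
Proof.
have [HLl HrL _ _] := HL.
by rewrite /deg /Fiota /= (bigjoinE HLl) /= meet_l ?le0x // (rk0 HLl HrL).
Qed.

End Product.

Lemma swapw_cat_adj (T : Type) (x0 : T) (a : seq T) x y b :
  swapw x0 (a ++ x :: y :: b) (size a) (size a).+1 = a ++ y :: x :: b.
Proof.
elim: a => [|c a IH] //=.
by rewrite /swapw /= in IH *; rewrite IH.
Qed.

Section WordSign.
Variable L : rawLat.
Variable V : lmodType rat.
Variable f : diagram L -> V.
Hypothesis fR1 : forall (G : diagram L) (i j : nat), valid G ->
         i < size (dword G) -> j < size (dword G) -> i != j ->
         f G = (- f (dswap G i j))%R.
Variable E : rawLat.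
Variable iota : car L -> car E.
Hypothesis Hm : modext iota.

Local Notation D w := (@Diagram L E iota w).

Lemma f_swap_adj a x y b : all (@atom E) (a ++ x :: y :: b) ->
  f (D (a ++ x :: y :: b)) = (- f (D (a ++ y :: x :: b)))%R.
Proof.
move=> ha; rewrite (fR1 (i := size a) (j := (size a).+1)) //=.
- by rewrite /dswap /= swapw_cat_adj.
- by rewrite size_cat /=; lia.
- by rewrite size_cat /=; lia.
- by rewrite neq_ltn ltnSn.
Qed.

Lemma f_move_letter a x t b : all (@atom E) (a ++ x :: t ++ b) ->
  f (D (a ++ x :: t ++ b)) = ((-1) ^+ size t *: f (D (a ++ t ++ x :: b)))%R.
Proof.
elim: t a => [|y t IH] a ha /=; first by rewrite expr0 scale1r.
rewrite f_swap_adj //.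
have -> : a ++ y :: x :: t ++ b = (rcons a y) ++ x :: t ++ b by rewrite -cats1 -catA.
rewrite IH; last first.
  rewrite -cats1 -catA /=.
  by move: ha; rewrite !all_cat /= => /and3P [-> -> /andP [-> ->]].
by rewrite -cats1 -catA /= exprS -scalerA scaleN1r.
Qed.

Lemma f_swap_blocks a s t : all (@atom E) (a ++ s ++ t) ->
  f (D (a ++ s ++ t)) = ((-1) ^+ (size s * size t) *: f (D (a ++ t ++ s)))%R.
Proof.
elim: s a => [|x s IH] a ha /=; first by rewrite mul0n expr0 scale1r cats0.
have -> : a ++ x :: s ++ t = (rcons a x) ++ s ++ t by rewrite -cats1 -catA.
rewrite IH; last by rewrite -cats1 -catA.
rewrite -cats1 -catA /= f_move_letter; last first.
  by move: ha; rewrite /= !all_cat /= !all_cat => /and3P [-> -> /andP [-> ->]].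
by rewrite scalerA -exprD mulSn addnC.
Qed.

End WordSign.

Lemma expN1z_parity (n1 n2 : nat) (k1 k2 : int) :
  ((-1 : rat) ^ ((n1%:Z - 2 * k1) * (n2%:Z - 2 * k2)))%R = ((-1) ^+ (n1 * n2))%R.
Proof.
have -> : ((n1%:Z - 2 * k1) * (n2%:Z - 2 * k2) =
          (n1 * n2)%N%:Z + (2 * (2 * k1 * k2 - n1%:Z * k2 - n2%:Z * k1)))%R.
  by rewrite PoszM; lia.
rewrite expfzDr ?oppr_eq0 ?oner_eq0 // -exprz_exp.
have h2 : ((-1 : rat) ^ (2%:Z) = 1)%R by rewrite -exprnP sqrrN expr1n.
by rewrite h2 exp1rz mulr1 -exprnP.
Qed.

Section Relations.
Variable L : rawLat.
Hypothesis HL : geometric L.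
Variable V : lmodType rat.
Variable f : diagram L -> V.
Hypothesis fR1 : forall (G : diagram L) (i j : nat), valid G ->
  i < size (dword G) -> j < size (dword G) -> i != j ->
  f G = (- f (dswap G i j))%R.
Hypothesis fR2 : forall (G G' : diagram L) (phi : car (dE G) -> car (dE G')),
  valid G -> valid G' -> embedding phi -> rkL (dE G) = rkL (dE G') ->
  (forall A, diota G' A = phi (diota G A)) ->
  dword G' = map phi (dword G) -> f G = f G'.

Lemma f_iso E E' (i : car L -> car E) (i' : car L -> car E') w w'
    (phi : car E -> car E') (psi : car E' -> car E) :
  valid (Diagram E i w) -> valid (Diagram E' i' w') ->
  cancel phi psi -> cancel psi phi -> (forall x y, le x y = le (phi x) (phi y)) ->
  (forall A, i' A = phi (i A)) -> w' = map phi w ->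
  f (Diagram E i w) = f (Diagram E' i' w').
Proof.
move=> hG hG' phiK psiK le_phi hi hw.
have [[[HE HrE _ _] _ _ _] _] := hG; have [[[HE' HrE' _ _] _ _ _] _] := hG'.
apply: (fR2 (G := Diagram E i w) (G' := Diagram E' i' w') (phi := phi)) => //.
  exact: (iso_embedding HE HE' phiK psiK le_phi).
exact: (iso_rkL HE HE' HrE HrE' phiK psiK le_phi).
Qed.

Lemma f_dmulG1 (G : diagram L) : valid G -> f (dmul G (dunit L)) = f G.
Proof.
case: G => E i w hG; have [M _] := hG; have Mid := id_modext HL.
have hid := valid_dunit HL; rewrite /dunit in hid *.
have hG1 := valid_dmul HL hG hid; rewrite (dmulE HL) //= in hG1 *.
symmetry; apply: (f_iso (phi := pinl i id) (psi := fun p => (val p).1)) => //=.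
- by move=> x; rewrite (val_pinl HL M Mid).
- move=> p; apply: val_inj.
  by rewrite (val_pinl HL M Mid) (lproj_pair HL M Mid p) lproj_id //; case: p => [[]].
- move=> x y; rewrite /= !(val_pinl HL M Mid) /=.
  by case h: (le x y) => //=; rewrite (lproj_le HL M h).
- by move=> A; apply: val_inj; rewrite (val_po_iota HL M Mid) (val_pinl HL M Mid) (lproj_iota HL M).
- by rewrite cats0.
Qed.

Lemma f_dmulC (G1 G2 : diagram L) : valid G1 -> valid G2 ->
  f (dmul G1 G2) = ((-1 : rat) ^ (deg G1 * deg G2)%R *: f (dmul G2 G1))%R.
Proof.
case: G1 G2 => [E1 i1 w1] [E2 i2 w2] h1 h2.
have h12 := valid_dmul HL h1 h2; have h21 := valid_dmul HL h2 h1.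
rewrite !(dmulE HL) // in h12 h21 *; have [M12 a12] := h12.
case: h1 h2 => M1 _ [M2 _].
have := f_swap_blocks fR1 (a := [::]) M12 a12; rewrite /= => ->.
rewrite /deg /= expN1z_parity !size_map; congr (_ *: _)%R.
symmetry; apply: (f_iso (phi := @po_swap _ _ _ i1 i2) (psi := @po_unswap _ _ _ i1 i2)) => //.
- by split; rewrite // all_cat andbC -all_cat.
- exact: (po_swapK HL M1 M2).
- exact: (po_unswapK HL M1 M2).
- exact: (le_po_swap HL M1 M2).
- exact: (po_swap_iota HL M1 M2).
- rewrite map_cat -!map_comp; congr (_ ++ _); apply: eq_map => x /=.
    by rewrite (po_swap_pinl HL M1 M2).
  by rewrite (po_swap_pinr HL M1 M2).
Qed.

Lemma f_dmul1G (G : diagram L) : valid G -> f (dmul (dunit L) G) = f G.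
Proof.
move=> hG; rewrite (f_dmulC (valid_dunit HL) hG) (deg_dunit HL) mul0r expr0z scale1r.
exact: f_dmulG1.
Qed.

Lemma f_dmulA (G1 G2 G3 : diagram L) : valid G1 -> valid G2 -> valid G3 ->
  f (dmul (dmul G1 G2) G3) = f (dmul G1 (dmul G2 G3)).
Proof.
case: G1 G2 G3 => [E1 i1 w1] [E2 i2 w2] [E3 i3 w3] h1 h2 h3.
have h12 := valid_dmul HL h1 h2; have h23 := valid_dmul HL h2 h3.
have hl := valid_dmul HL h12 h3; have hr := valid_dmul HL h1 h23.
rewrite (dmulE HL) // in h12; rewrite (dmulE HL) // in h23.
rewrite !(dmulE HL) // in hl hr *.
case: h1 h2 h3 => M1 _ [M2 _] [M3 _].
apply: (f_iso (phi := @po_assoc _ _ _ _ i1 i2 i3) (psi := @po_unassoc _ _ _ _ i1 i2 i3)) => //.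
- exact: (po_assocK HL M1 M2 M3).
- exact: (po_unassocK HL M1 M2 M3).
- exact: (le_po_assoc HL M1 M2 M3).
- exact: (po_assoc_iota HL M1 M2 M3).
- rewrite !map_cat -!map_comp catA; congr ((_ ++ _) ++ _); apply: eq_map => x /=.
  + by rewrite (po_assoc_pinl_pinl HL M1 M2 M3).
  + by rewrite (po_assoc_pinl_pinr HL M1 M2 M3).
  + by rewrite (po_assoc_pinr HL M1 M2 M3).
Qed.

End Relations.

Theorem lemma4 (L : rawLat) (HL : geometric L) (HnL : nontrivial L) :
  (forall G1 G2 : diagram L, valid G1 -> valid G2 ->
     deg (dmul G1 G2) = (deg G1 + deg G2)%R) /\
  (forall (V : lmodType rat) (f : diagram L -> V), respects f ->
     [/\ (forall G1 G2 G3 : diagram L, valid G1 -> valid G2 -> valid G3 ->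
            f (dmul (dmul G1 G2) G3) = f (dmul G1 (dmul G2 G3))),
         (forall G1 G2 : diagram L, valid G1 -> valid G2 ->
            f (dmul G1 G2) = (((-1 : rat) ^ (deg G1 * deg G2)%R) *: f (dmul G2 G1))%R) &
         (forall G : diagram L, valid G ->
            f (dmul G (dunit L)) = f G /\ f (dmul (dunit L) G) = f G)]).
Proof.
split=> [G1 G2|V f [R1 R2 _ _ _]]; first exact: deg_dmul.
split.
- by move=> G1 G2 G3; apply: (f_dmulA HL R2).
- by move=> G1 G2; apply: (f_dmulC HL R1 R2).
- by move=> G hG; split; [apply: f_dmulG1 | apply: f_dmul1G].
Qed.
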